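(* For every integer $n\ge8$, $\mathfrak{S}(G_n)<2^n$, where $G_n$ is the bipartite graph with parts $V_1=[n]$ and $V_2=[n]$ (two disjoint copies of $\{1,\dots,n\}$) and edge set $\{(a,b)\in V_1\times V_2:|a-b|=1\}$.
   Context: For a bipartite graph $G$ with parts $V_1,V_2$ whose vertices are labelled by integers (labels may be shared between the parts), $\mathfrak{S}(G)=\sum 2^{-|S_1\cup S_2|}$, the sum over all pairs $S_1\subseteq V_1$, $S_2\subseteq V_2$ with no edge of $G$ between $S_1$ and $S_2$; here $S_1\cup S_2$ is the union of the sets of labels (so a label appearing in both $S_1$ and $S_2$ is counted once). *)

From mathcomp Require Import all_boot all_order all_algebra.
Set Implicit Arguments. Unset Strict Implicit. Unset Printing Implicit Defensive.
Import Order.TTheory GRing.Theory Num.Theory.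
Local Open Scope ring_scope.

(* A vertex-labelled bipartite graph: parts V1, V2 (finite types), labels
   lab1 : V1 -> int, lab2 : V2 -> int (possibly shared between parts), and
   edge relation adj : V1 -> V2 -> bool. *)

Definition label_count (V1 V2 : finType) (lab1 : V1 -> int) (lab2 : V2 -> int)
  (S1 : {set V1}) (S2 : {set V2}) : nat :=
  size (undup ([seq lab1 x | x in S1] ++ [seq lab2 y | y in S2])).

Definition no_edge (V1 V2 : finType) (adj : V1 -> V2 -> bool)
  (S1 : {set V1}) (S2 : {set V2}) : bool :=
  [forall x in S1, forall y in S2, ~~ adj x y].

Definition frakS (V1 V2 : finType) (lab1 : V1 -> int) (lab2 : V2 -> int)
  (adj : V1 -> V2 -> bool) : rat :=
  \sum_(S1 : {set V1}) \sum_(S2 : {set V2} | no_edge adj S1 S2)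
     ((2%:R : rat) ^- (label_count lab1 lab2 S1 S2)).

(* G_n: parts two copies of [n] = {1..n}; vertex i : 'I_n has label i+1;
   edge (a,b) iff |a - b| = 1. *)
Definition Gn_lab (n : nat) (i : 'I_n) : int := (i.+1)%:Z.
Definition Gn_adj (n : nat) (a b : 'I_n) : bool := (`|(a%:Z - b%:Z)%R|%N == 1)%N.

From mathcomp Require Import all_boot all_order all_algebra.
From mathcomp Require Import zify ring lra.

(* Record a pair (S1, S2) of subsets of [n] as the word whose i-th letter is
   (i \in S1, i \in S2). The weight 2^-|S1 U S2| is a product of letter weights,
   and "no edge" only forbids two patterns between consecutive letters, so
   frakS(G_n) is a transfer-matrix sum over words. The two mixed states behave
   alike, leaving a three-term linear recurrence whose solution, scaled by 2^n,
   enters an invariant box at n = 8 and stays there; the box lies below 1 in the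
   coordinate that carries frakS(G_n). *)

Set Implicit Arguments.
Unset Strict Implicit.
Unset Printing Implicit Defensive.
Import Order.TTheory GRing.Theory Num.Theory.
Local Open Scope ring_scope.

Section PathSum.
Variables (A : finType) (R : pzSemiRingType) (e : rel A) (w : A -> R).

Definition path_sum (n : nat) (x : A) : R :=
  \sum_(t : n.-tuple A | path e x t) \prod_(y <- t) w y.

Lemma path_sum0 (x : A) : path_sum 0 x = 1.
Proof.
rewrite /path_sum (eq_bigl (pred1 [tuple])); last by move=> t; rewrite tuple0 /= eqxx.
by rewrite big_pred1_eq big_nil.
Qed.

Lemma path_sumS (n : nat) (x : A) :
  path_sum n.+1 x = \sum_(y | e x y) w y * path_sum n y.
Proof.
rewrite /path_sum (reindex (fun p : A * n.-tuple A => [tuple of p.1 :: p.2])) /=.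
  under eq_bigr do rewrite big_cons.
  rewrite -(pair_big_dep (e x) (fun y (t : n.-tuple A) => path e y t)
    (fun y (t : n.-tuple A) => w y * \prod_(z <- t) w z)) /=.
  by apply: eq_bigr => y _; rewrite big_distrr.
apply: onW_bij; exists (fun t => (thead t, [tuple of behead t])).
  by move=> [y t]; congr (_, _); apply: val_inj.
by move=> t; rewrite [in RHS](tuple_eta t).
Qed.

End PathSum.

Lemma path_tnth (T : Type) (e : rel T) (x : T) (n : nat) (t : n.-tuple T) :
  (forall y, e x y) ->
  path e x t = [forall i : 'I_n, forall j : 'I_n, (i.+1 == j :> nat) ==> e (tnth t i) (tnth t j)].
Proof.
move=> ex; apply/(pathP x)/forallP => [consec i | consec [|i] lt_i_t /=].
- apply/forallP => j; apply/implyP => /eqP ij; rewrite !(tnth_nth x) -ij.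
  by apply: (consec i.+1); rewrite size_tuple ij ltn_ord.
- exact: ex.
- rewrite size_tuple in lt_i_t.
  have /forallP/(_ (Ordinal lt_i_t)) := consec (Ordinal (ltnW lt_i_t)).
  by rewrite !(tnth_nth x) /= eqxx.
Qed.

Definition letter := (bool * bool)%type.

Definition compatible (x y : letter) : bool := ~~ (x.1 && y.2) && ~~ (x.2 && y.1).

Definition letter_weight (x : letter) : rat := if x.1 || x.2 then 2^-1 else 1.

Notation word_sum := (path_sum compatible letter_weight).

Definition transfer_step (v : rat * rat * rat) : rat * rat * rat :=
  let: (p, q, r) := v in (p + q + r / 2, p + q / 2, p).

Definition transfer (n : nat) : rat * rat * rat := iter n transfer_step (1, 1, 1).

Lemma sum_letter (F : letter -> rat) :
  \sum_(x : letter) F x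
  = F (true, true) + F (true, false) + (F (false, true) + F (false, false)).
Proof.
rewrite (eq_bigr (fun x : letter => F (x.1, x.2))); last by case.
by rewrite -(pair_big xpredT xpredT (fun a b => F (a, b))) /= !big_bool.
Qed.

Lemma word_sum_transfer (n : nat) :
  [/\ word_sum n (false, false) = (transfer n).1.1,
      word_sum n (true, false) = (transfer n).1.2,
      word_sum n (false, true) = (transfer n).1.2
    & word_sum n (true, true) = (transfer n).2].
Proof.
elim: n => [|n]; first by rewrite !path_sum0.
rewrite /transfer /= -/(transfer n); case: (transfer n) => [[p q] r] /= [Ep Eq Eq' Er].
rewrite !path_sumS !(big_mkcond (compatible _)) !sum_letter /compatible /letter_weight /=.
rewrite Ep Eq Eq' Er.
by split; rewrite ?mulr1 ?mul1r ?mulr0 ?add0r ?addr0; field; rewrite ?pnatr_eq0.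
Qed.

(* Invariant because 99 + 68 + 51/2 <= 2 * 99, 99 + 68/2 <= 2 * 68 and
   99 <= 2 * 51; n = 8 is the first n with (transfer n).1.1 < 2^n. *)
Definition transfer_bound (n : nat) (v : rat * rat * rat) : bool :=
  let: (p, q, r) := v in
  [&& p <= 99 / 100 * 2 ^+ n, q <= 68 / 100 * 2 ^+ n & r <= 51 / 100 * 2 ^+ n].

Lemma transfer_bound_step (n : nat) (v : rat * rat * rat) :
  transfer_bound n v -> transfer_bound n.+1 (transfer_step v).
Proof.
case: v => [[p q] r] /and3P [hp hq hr]; rewrite /= exprS.
have : 0 < (2 : rat) ^+ n by rewrite exprn_gt0.
by move=> pos2n; apply/and3P; split; lra.
Qed.

Lemma transfer_bound8 : transfer_bound 8 (transfer 8).
Proof. by vm_compute. Qed.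

Lemma transfer_bound_ge8 (n : nat) : (8 <= n)%N -> transfer_bound n (transfer n).
Proof.
elim: n => [|n IHn] //; rewrite leq_eqVlt => /predU1P [<- | lt8n].
  exact: transfer_bound8.
exact: transfer_bound_step (IHn lt8n).
Qed.

Lemma transfer_lt (n : nat) : (8 <= n)%N -> (transfer n).1.1 < 2 ^+ n.
Proof.
move/transfer_bound_ge8; case: (transfer n) => [[p q] r] /and3P [hp _ _] /=.
have : 0 < (2 : rat) ^+ n by rewrite exprn_gt0.
by move=> pos2n; lra.
Qed.

Lemma label_count_inj (V : finType) (lab : V -> int) (S1 S2 : {set V}) :
  injective lab -> label_count lab lab S1 S2 = #|S1 :|: S2|.
Proof.
move=> lab_inj; rewrite /label_count -map_cat undup_map_inj // size_map cardE.
apply: perm_size; apply: uniq_perm; rewrite ?undup_uniq ?enum_uniq // => x.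
by rewrite mem_undup mem_cat !mem_enum in_setU.
Qed.

Lemma Gn_lab_inj (n : nat) : injective (@Gn_lab n).
Proof. by move=> a b [] /val_inj. Qed.

Lemma Gn_adjE (n : nat) (a b : 'I_n) : Gn_adj a b = (a.+1 == b :> nat) || (b.+1 == a :> nat).
Proof.
rewrite /Gn_adj; apply/eqP/orP => [|[] /eqP]; lia.
Qed.

Section Encoding.
Variable n : nat.

Definition word (S : {set 'I_n} * {set 'I_n}) : n.-tuple letter :=
  [tuple (i \in S.1, i \in S.2) | i < n].

Lemma word_bij : bijective word.
Proof.
exists (fun t => ([set i | (tnth t i).1], [set i | (tnth t i).2])).
  by move=> [S1 S2]; congr (_, _); apply/setP => i; rewrite inE tnth_mktuple.
by move=> t; apply: eq_from_tnth => i; rewrite tnth_mktuple !inE; case: (tnth t i).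
Qed.

Lemma prod_weight_word (S : {set 'I_n} * {set 'I_n}) :
  \prod_(x <- word S) letter_weight x = 2 ^- #|S.1 :|: S.2|.
Proof.
rewrite big_tuple -exprVn -prodr_const [RHS]big_mkcond.
by apply: eq_bigr => i _; rewrite tnth_mktuple in_setU /letter_weight.
Qed.

Lemma path_word (S : {set 'I_n} * {set 'I_n}) :
  path compatible (false, false) (word S) = no_edge (@Gn_adj n) S.1 S.2.
Proof.
rewrite path_tnth //; apply/idP/idP => [/forallP consec | /forall_inP no_adj].
  apply/forall_inP => a aS1; apply/forall_inP => b bS2.
  rewrite Gn_adjE; apply/negP => /orP [] /eqP ab.
    have /forallP/(_ b) := consec a.
    by rewrite ab eqxx !tnth_mktuple aS1 bS2 /compatible /=.
  have /forallP/(_ a) := consec b.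
  by rewrite ab eqxx !tnth_mktuple aS1 bS2 /compatible /= andbF.
apply/forallP => i; apply/forallP => j; apply/implyP => /eqP ij.
rewrite !tnth_mktuple /compatible /=; apply/andP; split; apply/negP => /andP [iS jS].
  by have /forall_inP/(_ j jS) := no_adj i iS; rewrite Gn_adjE ij eqxx.
by have /forall_inP/(_ i iS) := no_adj j jS; rewrite Gn_adjE ij eqxx orbT.
Qed.

End Encoding.

Lemma frakS_Gn (n : nat) :
  frakS (@Gn_lab n) (@Gn_lab n) (@Gn_adj n) = word_sum n (false, false).
Proof.
rewrite /path_sum (reindex (@word n)) /=; last exact: onW_bij (word_bij n).
rewrite /frakS pair_big_dep; apply: eq_big => S; first by rewrite path_word.
by rewrite prod_weight_word label_count_inj //; apply: Gn_lab_inj.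
Qed.

Theorem mainTheorem14 (n : nat) (hn : (8 <= n)%N) :
  frakS (@Gn_lab n) (@Gn_lab n) (@Gn_adj n) < (2%:R : rat) ^+ n.
Proof.
rewrite frakS_Gn; have [-> _ _ _] := word_sum_transfer n.
exact: transfer_lt.
Qed.
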